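(* Fix $x\in\mathbb{C}$. The function $f:[0,\infty)\to\mathbb{R}$ defined by $$f(s):=\log\Big(\frac{1+a+\sqrt{(1+a)^2-b^2}}{2}\Big),\qquad a:=|x|^2+s,\quad b:=2|x|\sqrt{s},$$ (i.e. $f(|y|^2)$ with $a=|x|^2+|y|^2$, $b=2|x||y|$) is strictly increasing on $[0,\infty)$.
   Context: $\log$ is the logarithm in a fixed base. *)

From Stdlib Require Import Reals.
From Coquelicot Require Import Coquelicot.
Open Scope R_scope.

Definition logb (beta t : R) : R := ln t / ln beta.

Definition f_x (beta : R) (x : C) (s : R) : R :=
  let a := (Cmod x) ^ 2 + s in
  let b := 2 * Cmod x * sqrt s in
  logb beta ((1 + a + sqrt ((1 + a) ^ 2 - b ^ 2)) / 2).

(* With c := |x|^2 and u := s - c + 1 the discriminant is (1 + a)^2 - b^2 = u^2 + 4c,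
   so f(s) = log (c + (u + sqrt (u^2 + 4c)) / 2).  The map u |-> u + sqrt (u^2 + k)
   is increasing for k >= 0, strictly so wherever u + sqrt (u^2 + k) > 0; this
   holds for every u when c > 0, and for u = s + 1 > 0 when c = 0. *)
From Stdlib Require Import Reals Lra Psatz.
From Coquelicot Require Import Coquelicot.
Open Scope R_scope.

Lemma logb_increasing (beta a b : R) :
  1 < beta -> 0 < a -> a < b -> logb beta a < logb beta b.
Proof.
  intros Hbeta Ha Hab; unfold logb, Rdiv.
  assert (Hln : 0 < ln beta) by (rewrite <- ln_1; apply ln_increasing; lra).
  apply Rmult_lt_compat_r; [now apply Rinv_0_lt_compat | now apply ln_increasing].
Qed.

Lemma opp_lt_sqrt_sqr_add (k v : R) :
  0 <= k -> 0 < k \/ 0 < v -> - v < sqrt (v ^ 2 + k).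
Proof.
  intros Hk Hkv.
  pose proof (sqrt_pos (v ^ 2 + k)) as Hpos.
  destruct (Rlt_or_le 0 v) as [Hv | Hv]; [lra |].
  assert (Hk0 : 0 < k) by lra.
  apply sqrt_lt_R0 in Hk0.
  rewrite <- (sqrt_pow2 (- v)) by lra.
  apply sqrt_lt_1; nra.
Qed.

Lemma add_sqrt_sqr_add_lt (k u v : R) :
  0 <= k -> u < v -> - v < sqrt (v ^ 2 + k) ->
  u + sqrt (u ^ 2 + k) < v + sqrt (v ^ 2 + k).
Proof.
  intros Hk Huv Hv.
  pose proof (sqrt_pos (u ^ 2 + k)) as HA.
  pose proof (pow2_sqrt (u ^ 2 + k) ltac:(nra)) as EA.
  pose proof (pow2_sqrt (v ^ 2 + k) ltac:(nra)) as EB.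
  set (A := sqrt (u ^ 2 + k)) in *.
  set (B := sqrt (v ^ 2 + k)) in *.
  (* (B + v - u)^2 - A^2 = 2 (v - u) (B + v) > 0, and B + v - u > 0 *)
  assert (Hpos : 0 < B + v - u) by nra.
  assert (A ^ 2 < (B + v - u) ^ 2) by nra.
  nra.
Qed.

Lemma f_x_eq (beta : R) (x : C) (s : R) : 0 <= s ->
  f_x beta x s =
  logb beta ((1 + (Cmod x ^ 2 + s)
              + sqrt ((s - Cmod x ^ 2 + 1) ^ 2 + 4 * Cmod x ^ 2)) / 2).
Proof.
  intros Hs; unfold f_x.
  rewrite !Rpow_mult_distr, pow2_sqrt by lra.
  now replace ((1 + (Cmod x ^ 2 + s)) ^ 2 - 2 ^ 2 * Cmod x ^ 2 * s)
    with ((s - Cmod x ^ 2 + 1) ^ 2 + 4 * Cmod x ^ 2) by ring.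
Qed.

Theorem lemma2 (beta : R) (Hbeta : 1 < beta) (x : C) :
  forall s t : R, 0 <= s -> s < t -> f_x beta x s < f_x beta x t.
Proof.
  intros s t Hs Hst.
  rewrite (f_x_eq beta x s), (f_x_eq beta x t) by lra.
  assert (Hc : 0 <= Cmod x ^ 2) by apply pow2_ge_0.
  set (c := Cmod x ^ 2) in *.
  assert (Hgap : - (t - c + 1) < sqrt ((t - c + 1) ^ 2 + 4 * c)).
  { apply opp_lt_sqrt_sqr_add; [lra |].
    destruct (Rle_lt_or_eq_dec 0 c Hc); [left | right]; lra. }
  pose proof (add_sqrt_sqr_add_lt (4 * c) (s - c + 1) (t - c + 1)
                ltac:(lra) ltac:(lra) Hgap) as Hmono.
  pose proof (sqrt_pos ((s - c + 1) ^ 2 + 4 * c)).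
  apply logb_increasing; lra.
Qed.
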